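(* Let $c$ be a Coxeter element. Define $\alpha\mapsto\overline{\alpha}$ from $\Phi_{\mathrm{ap}}(c)$ to $\Phi_{\mathrm{ap}}(c^{-1})$ by $\overline{-\beta_i^c}:=-\beta_i^{c^{-1}}$ for $i\in I$ and $\overline{\alpha}:=\alpha$ otherwise. Then for all $\alpha,\gamma\in\Phi_{\mathrm{ap}}(c)$, $(\alpha||\gamma)_c=(\overline\alpha||\overline\gamma)_{c^{-1}}$.
   Context: Let $I$ be a finite type Dynkin diagram with root system $\Phi$, positive roots $\Phi_+$, simple roots $\alpha_i$, Weyl group $W$ with simple reflections $s_i$. A Coxeter element $c$ is a product of all $s_i$, each once (then $c^{-1}$ is also a Coxeter element). For a reduced expression $c=s_{i_1}\cdots s_{i_n}$ put $\beta^c_{i_k}:=s_{i_n}\cdots s_{i_{k+1}}\alpha_{i_k}$. $\Phi_{\mathrm{ap}}(c):=\Phi_+\cup\{-\beta_i^c\}_{i\in I}$. $\tau_c:\Phi_{\mathrm{ap}}(c)\to\Phi_{\mathrm{ap}}(c)$ is $\tau_c(\beta_i^c)=-\beta_i^c$, $\tau_c(\alpha)=c\alpha$ otherwise. With $[\gamma;\alpha_i]$ the coefficient of $\alpha_i$ in $\gamma$ and $[x]_+=\max\{x,0\}$, $(\bullet||\bullet)_c$ is the unique $\tau_c$-invariant function on $\Phi_{\mathrm{ap}}(c)^2$ with $(-\beta_i^c||\alpha)_c=[\alpha;\alpha_i]_+$; similarly for $c^{-1}$. *)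

From HB Require Import structures.
From mathcomp Require Import all_boot all_order all_algebra.
Set Implicit Arguments. Unset Strict Implicit. Unset Printing Implicit Defensive.
Import Order.TTheory GRing.Theory Num.Theory.
Local Open Scope ring_scope.

(* Index set I = 'I_n.  Roots are encoded by their coefficient vectors in the
   basis of simple roots: gamma = \sum_i gamma 0 i * alpha_i. *)

(* A (generalized) Cartan matrix A, A i j = <alpha_i^vee, alpha_j>. *)
Definition is_cartan (n : nat) (A : 'M[int]_n) : Prop :=
  (forall i, A i i = 2) /\
  (forall i j, i != j -> A i j <= 0) /\
  (forall i j, A i j = 0 <-> A j i = 0).

(* Finite type: symmetrizable with positive definite symmetrization
   (equivalently, the Dynkin diagram is a finite type Dynkin diagram). *)
Definition finite_type_cartan (n : nat) (A : 'M[int]_n) : Prop :=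
  is_cartan A /\
  exists d : 'I_n -> rat,
    (forall i, 0 < d i) /\
    (forall i j, d i * (A i j)%:~R = d j * (A j i)%:~R) /\
    (forall x : 'rV[rat]_n, x != 0 ->
       0 < \sum_i \sum_j x 0 i * (d i * (A i j)%:~R) * x 0 j).

Definition sroot (n : nat) (i : 'I_n) : 'rV[int]_n := delta_mx 0 i.

Definition coef (n : nat) (g : 'rV[int]_n) (i : 'I_n) : int := g 0 i.

Definition sref (n : nat) (A : 'M[int]_n) (i : 'I_n) (v : 'rV[int]_n)
  : 'rV[int]_n :=
  v - (\sum_j A i j * v 0 j) *: sroot i.

Definition wact (n : nat) (A : 'M[int]_n) (w : seq 'I_n) (v : 'rV[int]_n)
  : 'rV[int]_n :=
  foldr (fun i u => sref A i u) v w.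

Definition is_root (n : nat) (A : 'M[int]_n) (v : 'rV[int]_n) : Prop :=
  exists (w : seq 'I_n) (i : 'I_n), v = wact A w (sroot i).

Definition is_pos_root (n : nat) (A : 'M[int]_n) (v : 'rV[int]_n) : Prop :=
  is_root A v /\ forall i, 0 <= v 0 i.

(* A Coxeter element c is given by a reduced expression
   c = s_{i_1} ... s_{i_n}, i.e. a list [:: i_1; ...; i_n] using every
   index exactly once. *)
Definition coxeter_word (n : nat) (l : seq 'I_n) : Prop :=
  perm_eq l (enum 'I_n).

Definition cox (n : nat) (A : 'M[int]_n) (l : seq 'I_n) (v : 'rV[int]_n) :=
  wact A l v.

(* beta^c_{i_k} = s_{i_n} ... s_{i_{k+1}} alpha_{i_k} *)
Definition beta (n : nat) (A : 'M[int]_n) (l : seq 'I_n) (i : 'I_n)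
  : 'rV[int]_n :=
  wact A (rev (drop (index i l).+1 l)) (sroot i).

Definition in_Phi_ap (n : nat) (A : 'M[int]_n) (l : seq 'I_n)
  (a : 'rV[int]_n) : Prop :=
  is_pos_root A a \/ exists i, a = - beta A l i.

Definition tau (n : nat) (A : 'M[int]_n) (l : seq 'I_n) (a : 'rV[int]_n)
  : 'rV[int]_n :=
  if [pick i | a == beta A l i] is Some i then - beta A l i else cox A l a.

Definition posp (x : int) : int := Num.max x 0.

(* f is "(. || .)_c": tau_c-invariant on Phi_ap(c)^2 and
   (-beta_i^c || alpha)_c = [alpha ; alpha_i]_+ for alpha in Phi_ap(c). *)
Definition is_pairing_c (n : nat) (A : 'M[int]_n) (l : seq 'I_n)
  (f : 'rV[int]_n -> 'rV[int]_n -> int) : Prop :=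
  (forall a g, in_Phi_ap A l a -> in_Phi_ap A l g ->
      f (tau A l a) (tau A l g) = f a g) /\
  (forall i a, in_Phi_ap A l a -> f (- beta A l i) a = posp (coef a i)).

(* the map alpha |-> overline alpha from Phi_ap(c) to Phi_ap(c^{-1});
   c^{-1} = s_{i_n} ... s_{i_1} has reduced expression rev l. *)
Definition bar (n : nat) (A : 'M[int]_n) (l : seq 'I_n) (a : 'rV[int]_n)
  : 'rV[int]_n :=
  if [pick i | a == - beta A l i] is Some i then - beta A (rev l) i else a.

From HB Require Import structures.
From mathcomp Require Import all_boot all_order all_algebra.
From mathcomp Require Import ring lra zify.
Set Implicit Arguments. Unset Strict Implicit. Unset Printing Implicit Defensive.
Import Order.TTheory GRing.Theory Num.Theory.
Local Open Scope ring_scope.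

(* A pairing with the defining properties is determined by its values
   on the [- beta_i] together with [tau]-invariance, as soon as every positive
   root reaches some [- beta_i^c] under iteration of [tau_c].  Since [bar]
   maps [- beta_i^c] to [- beta_i^(c^-1)] and satisfies
   [tau_(c^-1) (bar (tau_c x)) = bar x], the pairings for [c] and [c^-1] then
   correspond through [bar].
   On positive roots other than the [beta_i^c], [tau_c] acts as [c], which
   maps them to positive roots because roots are sign-coherent and [s_j]
   permutes the positive roots other than [alpha_j].  An orbit of [c] cannot
   stay nonnegative forever: [c] fixes no nonzero vector, so by the
   [W]-invariant positive definite form the coordinate sums along the orbit
   telescope to a quantity bounded by Cauchy-Schwarz, while each term of a
   nonnegative orbit contributes at least 1. *)

Lemma sqr_le_bound (R : realDomainType) (t K : R) :
  0 <= K -> t ^+ 2 <= K -> t <= 1 + K.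
Proof. by move=> K0 tK; nra. Qed.

Lemma sum_symmetric (R : comNzRingType) n (v : 'I_n -> 'I_n -> R) :
  (forall a b, v a b = v b a) ->
  \sum_(a < n) \sum_(b < n) v a b
  = \sum_(a < n) v a a + 2 * \sum_(a < n) \sum_(b < n) (a < b)%N%:R * v a b.
Proof.
move=> v_sym.
have split3 : \sum_(a < n) \sum_(b < n) v a b
    = \sum_(a < n) \sum_(b < n) (a < b)%N%:R * v a b
    + \sum_(a < n) \sum_(b < n) (b < a)%N%:R * v a b
    + \sum_(a < n) \sum_(b < n) (a == b)%:R * v a b.
  rewrite -!big_split; apply: eq_bigr => a _; rewrite -!big_split /=.
  apply: eq_bigr => b _; rewrite -val_eqE.
  by case: ltngtP => [_|_|/val_inj->]; rewrite ?(mul1r, mul0r, addr0, add0r).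
have lt_sym : \sum_(a < n) \sum_(b < n) (b < a)%N%:R * v a b
              = \sum_(a < n) \sum_(b < n) (a < b)%N%:R * v a b.
  rewrite exchange_big /=; apply: eq_bigr => a _.
  by apply: eq_bigr => b _; rewrite v_sym.
have diag : \sum_(a < n) \sum_(b < n) (a == b)%:R * v a b = \sum_(a < n) v a a.
  apply: eq_bigr => a _; rewrite (bigD1 a) //= eqxx mul1r big1 ?addr0 // => b ba.
  by rewrite eq_sym (negbTE ba) mul0r.
by rewrite split3 lt_sym diag; ring.
Qed.

Lemma int_half_sum_symmetric (R : archiNumFieldType) n (v : 'I_n -> 'I_n -> R) :
  (forall a b, v a b = v b a) -> (forall a b, v a b \is a Num.int) ->
  (forall a, v a a / 2 \is a Num.int) ->
  (\sum_a \sum_b v a b) / 2 \is a Num.int.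
Proof.
move=> v_sym v_int v_even.
rewrite sum_symmetric // mulrDl [2 * _]mulrC mulfK ?pnatr_eq0 //.
rewrite mulr_suml rpredD ?rpred_sum // => a _.
by rewrite rpred_sum // => b _; rewrite rpredM ?v_int ?natr_int.
Qed.

Lemma posp_ge0 (z : int) : 0 <= posp z.
Proof. by rewrite /posp le_max lexx orbT. Qed.

Lemma posp_mulN (z : int) : posp z * posp (- z) = 0.
Proof.
rewrite /posp; have [z0|_] := lerP 0 z; last by rewrite mul0r.
by rewrite max_r ?mulr0 // oppr_le0.
Qed.

Lemma posp_int (R : archiNumDomainType) (z : int) (c : R) :
  z%:~R * c \is a Num.int -> (posp z)%:~R * c \is a Num.int.
Proof.
by rewrite /posp; case: (lerP 0 z) => // _ _; rewrite mul0r int_num0.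
Qed.

Lemma int_gt0_ge1 (R : archiNumDomainType) (t : R) : t \is a Num.int -> 0 < t -> 1 <= t.
Proof. by move=> t_int t_gt0; rewrite -(gtr0_norm t_gt0) norm_intr_ge1 ?gt_eqF. Qed.

Lemma uniq_cat_cons_notin (T : eqType) (l1 l2 : seq T) i :
  uniq (l1 ++ i :: l2) -> [/\ i \notin l1, i \notin l2 & uniq l2].
Proof.
rewrite cat_uniq /= => /and3P[_ il1 /andP[-> ->]]; split=> //.
by apply: contra il1 => /= ->.
Qed.

Definition toQ n (v : 'rV[int]_n) : 'rV[rat]_n := map_mx intr v.

Lemma toQ_coord_sum_ge1 n (x : 'rV[int]_n) :
  x != 0 -> (forall j, 0 <= x 0 j) -> 1 <= \sum_j toQ x 0 j.
Proof.
move=> x0 x_ge0; have [j xj0] : exists j, x 0 j != 0.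
  apply/existsP; apply: contraR x0 => /existsPn xj0.
  by apply/eqP/rowP => j; rewrite mxE; apply/eqP/negPn.
rewrite (bigD1 j) //= -[1]addr0 lerD ?sumr_ge0 // => [|k _]; last by rewrite mxE ler0z.
by have := x_ge0 j; rewrite mxE ler1z; lia.
Qed.

Section RootSystem.
Variables (n : nat) (A : 'M[int]_n).

Definition coroot_eval (v : 'rV[int]_n) (i : 'I_n) : int := \sum_j A i j * v 0 j.

Lemma sref_coord i v k : sref A i v 0 k = v 0 k - (k == i)%:R * coroot_eval v i.
Proof. by rewrite /sref /sroot !mxE eqxx mulrC. Qed.

Lemma sref_coord_neq i v k : k != i -> sref A i v 0 k = v 0 k.
Proof. by move=> /negbTE ki; rewrite sref_coord ki mul0r subr0. Qed.

Lemma wact_coord_notin w v k : k \notin w -> wact A w v 0 k = v 0 k.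
Proof.
elim: w => [|j w IHw] //=; rewrite in_cons negb_or => /andP[kj kw].
by rewrite sref_coord_neq // IHw.
Qed.

Lemma srefN i v : sref A i (- v) = - sref A i v.
Proof.
apply/rowP => k; rewrite [RHS]mxE !sref_coord /coroot_eval mxE.
under eq_bigr do rewrite mxE mulrN.
by rewrite sumrN; ring.
Qed.

Lemma wactN w v : wact A w (- v) = - wact A w v.
Proof. by elim: w => [|j w IHw] //=; rewrite IHw srefN. Qed.

Lemma sref0 i : sref A i 0 = 0.
Proof.
apply/rowP => k; rewrite sref_coord /coroot_eval big1 ?mulr0 ?mxE ?subr0 // => j _.
by rewrite mxE mulr0.
Qed.

Lemma wact0 w : wact A w 0 = 0.
Proof. by elim: w => [|i w IHw] //=; rewrite IHw sref0. Qed.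

Lemma wact_cat w1 w2 v : wact A (w1 ++ w2) v = wact A w1 (wact A w2 v).
Proof. exact: foldr_cat. Qed.

Lemma wact_root w v : is_root A v -> is_root A (wact A w v).
Proof. by case=> w' [i ->]; exists (w ++ w'), i; rewrite wact_cat. Qed.

Hypothesis A_diag : forall i, A i i = 2.

Lemma coroot_eval_sroot i : coroot_eval (sroot i) i = 2.
Proof.
rewrite /coroot_eval (bigD1 i) //= big1 => [|j ji]; last first.
  by rewrite !mxE (negbTE ji) mulr0.
by rewrite !mxE !eqxx A_diag mulr1 addr0.
Qed.

Lemma coroot_eval_sref i v : coroot_eval (sref A i v) i = - coroot_eval v i.
Proof.
rewrite /coroot_eval; under eq_bigr do rewrite sref_coord mulrBr.
rewrite sumrB -/(coroot_eval v i) (bigD1 i) //= eqxx big1 => [|j /negbTE ->].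
  by rewrite A_diag mul1r addr0; ring.
by rewrite mul0r mulr0.
Qed.

Lemma srefK i : involutive (sref A i).
Proof. by move=> v; apply/rowP => k; rewrite !sref_coord coroot_eval_sref; ring. Qed.

Lemma sref_sroot i : sref A i (sroot i) = - sroot i.
Proof.
apply/rowP => k; rewrite sref_coord coroot_eval_sroot !mxE /=.
by case: (k == i); ring.
Qed.

Lemma wact_revK w : cancel (wact A w) (wact A (rev w)).
Proof.
elim: w => [|j w IHw] v //=.
by rewrite rev_cons -cats1 wact_cat /= srefK IHw.
Qed.

Lemma wact_revKV w : cancel (wact A (rev w)) (wact A w).
Proof. by move=> v; rewrite -{1}(revK w) wact_revK. Qed.

Variable d : 'I_n -> rat.
Hypothesis d_sym : forall i j, d i * (A i j)%:~R = d j * (A j i)%:~R.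

Definition corootQ (v : 'rV[rat]_n) i : rat := \sum_j (A i j)%:~R * v 0 j.

Definition reflmx i : 'M[rat]_n :=
  1%:M - \matrix_(j, k) ((A i j)%:~R * (k == i)%:R).

Definition wordmx (w : seq 'I_n) : 'M[rat]_n :=
  foldr (fun i M => M *m reflmx i) 1%:M w.

Lemma reflmx_coord v i k : (v *m reflmx i) 0 k = v 0 k - (k == i)%:R * corootQ v i.
Proof.
rewrite mulmxBr mulmx1 !mxE /corootQ mulr_sumr; congr (_ - _).
by apply: eq_bigr => j _; rewrite mxE; ring.
Qed.

Lemma reflmxE v i : v *m reflmx i = v - corootQ v i *: delta_mx 0 i.
Proof. by apply/rowP => k; rewrite reflmx_coord !mxE /= mulrC. Qed.

Lemma toQ_coroot_eval v i : (coroot_eval v i)%:~R = corootQ (toQ v) i.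
Proof. by rewrite rmorph_sum; apply: eq_bigr => j _; rewrite rmorphM mxE. Qed.

Lemma toQ_sref i v : toQ (sref A i v) = toQ v *m reflmx i.
Proof.
apply/rowP => k; rewrite reflmx_coord -toQ_coroot_eval [LHS]mxE sref_coord mxE.
by rewrite rmorphB rmorphM; case: (k == i).
Qed.

Lemma toQ_wact w v : toQ (wact A w v) = toQ v *m wordmx w.
Proof.
elim: w => [|i w IHw] /=; first by rewrite mulmx1.
by rewrite toQ_sref IHw mulmxA.
Qed.

Lemma wordmx_coord_notin w (x : 'rV[rat]_n) k :
  k \notin w -> (x *m wordmx w) 0 k = x 0 k.
Proof.
elim: w => [|j w IHw] /=; first by rewrite mulmx1.
rewrite in_cons negb_or => /andP[kj kw].
by rewrite mulmxA reflmx_coord (negbTE kj) mul0r subr0 IHw.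
Qed.

Definition symA : 'M[rat]_n := \matrix_(i, j) (d i * (A i j)%:~R).

Definition bform (x y : 'rV[rat]_n) : rat := (x *m symA *m y^T) 0 0.

Lemma bform_sum x y :
  bform x y = \sum_i \sum_j x 0 i * (d i * (A i j)%:~R) * y 0 j.
Proof.
rewrite /bform mxE exchange_big /=; apply: eq_bigr => j _.
by rewrite !mxE mulr_suml; apply: eq_bigr => i _; rewrite !mxE.
Qed.

Lemma bformC x y : bform x y = bform y x.
Proof.
rewrite !bform_sum exchange_big /=; apply: eq_bigr => i _; apply: eq_bigr => j _.
by rewrite d_sym; ring.
Qed.

Lemma bformBl x y z : bform (x - y) z = bform x z - bform y z.
Proof. by rewrite /bform !mulmxBl mxE [X in _ + X]mxE. Qed.

Lemma bformZl a x z : bform (a *: x) z = a * bform x z.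
Proof. by rewrite /bform -!scalemxAl mxE. Qed.

Lemma bformBr x y z : bform z (x - y) = bform z x - bform z y.
Proof. by rewrite bformC bformBl !(bformC z). Qed.

Lemma bformZr a x z : bform z (a *: x) = a * bform z x.
Proof. by rewrite bformC bformZl bformC. Qed.

Lemma bform0r z : bform z 0 = 0.
Proof. by rewrite /bform trmx0 mulmx0 mxE. Qed.

Lemma bform_deltal i v : bform (delta_mx 0 i) v = d i * corootQ v i.
Proof.
rewrite bform_sum (bigD1 i) //= [X in _ + X]big1 ?addr0 => [|j ji]; last first.
  by apply: big1 => k _; rewrite !mxE (negbTE ji) !mul0r.
rewrite /corootQ mulr_sumr; apply: eq_bigr => k _.
by rewrite !mxE !eqxx mul1r mulrA.
Qed.

Lemma corootQ_delta i : corootQ (delta_mx 0 i) i = 2.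
Proof.
rewrite /corootQ (bigD1 i) //= big1 ?addr0 => [|j ji]; last first.
  by rewrite !mxE (negbTE ji) mulr0.
by rewrite !mxE !eqxx A_diag mulr1.
Qed.

Lemma bform_reflmx v i : bform (v *m reflmx i) (v *m reflmx i) = bform v v.
Proof.
rewrite reflmxE bformBl !bformBr !bformZl !bformZr (bformC v) !bform_deltal.
by rewrite corootQ_delta; ring.
Qed.

Lemma bform_wordmx v w : bform (v *m wordmx w) (v *m wordmx w) = bform v v.
Proof.
by elim: w => [|i w IHw] /=; rewrite ?mulmx1 // mulmxA bform_reflmx.
Qed.

Hypothesis bform_gt0 : forall x : 'rV[rat]_n, x != 0 -> 0 < bform x x.

Lemma bform_ge0 x : 0 <= bform x x.
Proof.
have [->|x0] := eqVneq x 0; first by rewrite bform0r.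
exact/ltW/bform_gt0.
Qed.

Lemma bform_eq0 x : bform x x = 0 -> x = 0.
Proof.
by apply: contra_eq => /bform_gt0; rewrite lt0r => /andP[].
Qed.

Lemma bform_cauchy_schwarz v w : bform v w ^+ 2 <= bform v v * bform w w.
Proof.
have [/bform_eq0 ->|w0] := eqVneq (bform w w) 0.
  by rewrite !bform0r expr0n mulr0.
set t := bform v w / bform w w.
have E : bform (v - t *: w) (v - t *: w) * bform w w
         = bform v v * bform w w - bform v w ^+ 2.
  by rewrite bformBl !bformBr !bformZl !bformZr (bformC w v) /t; field.
by rewrite -subr_ge0 -E mulr_ge0 ?bform_ge0.
Qed.

Lemma wordmx_fixed_corootQ w (x : 'rV[rat]_n) :
  uniq w -> x *m wordmx w = x -> {in w, forall i, corootQ x i = 0}.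
Proof.
elim: w => [|j w IHw] //= /andP[jw w_uniq]; rewrite mulmxA => fix_x.
set y := x *m wordmx w in fix_x.
have yj0 : corootQ y j = 0.
  move/rowP/(_ j): fix_x; rewrite reflmx_coord eqxx mul1r /y wordmx_coord_notin //.
  by move=> E; lra.
have yx : y = x by rewrite -fix_x reflmxE yj0 scale0r subr0.
move=> i; rewrite in_cons => /predU1P[->|iw]; first by rewrite -yx.
exact: IHw.
Qed.

Hypothesis d_gt0 : forall i, 0 < d i.
Hypothesis A_offdiag : forall i j, i != j -> A i j <= 0.

(* The two W-invariants of a root [w alpha_i] used below: it has the norm of
   [alpha_i], and its coroot [sum_j x_j (d j / d i) alpha_j^vee] is integral. *)
Definition rootlike (x : 'rV[int]_n) : Prop :=
  exists i, bform (toQ x) (toQ x) = 2 * d i /\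
            forall j, (x 0 j)%:~R * d j / d i \is a Num.int.

Lemma d_neq0 i : d i != 0.
Proof. by rewrite gt_eqF. Qed.

Lemma toQ_sroot i : toQ (sroot i) = delta_mx 0 i :> 'rV[rat]_n.
Proof. by apply/rowP => k; rewrite !mxE; case: (k == i). Qed.

Lemma rootlike_sroot i : rootlike (sroot i).
Proof.
exists i; split; first by rewrite toQ_sroot bform_deltal corootQ_delta // mulrC.
move=> j; rewrite mxE /=; have [->|_] := eqVneq j i.
  by rewrite mul1r divff ?d_neq0 ?int_num1.
by rewrite !mul0r int_num0.
Qed.

Lemma rootlike_sref j x : rootlike x -> rootlike (sref A j x).
Proof.
move=> [i [x_norm x_int]]; exists i; split; first by rewrite toQ_sref bform_reflmx.
move=> k; rewrite sref_coord; have [->|_] := eqVneq k j; last by rewrite mul0r subr0.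
have -> : (x 0 j - 1%:R * coroot_eval x j)%:~R * d j / d i
          = (x 0 j)%:~R * d j / d i - \sum_k (A k j)%:~R * ((x 0 k)%:~R * d k / d i).
  rewrite mul1r rmorphB /= !mulrBl rmorph_sum /= !mulr_suml; congr (_ - _).
  apply: eq_bigr => m _; rewrite rmorphM /=.
  transitivity (d j * (A j m)%:~R * (x 0 m)%:~R / d i); first by ring.
  by rewrite d_sym; ring.
by rewrite rpredB ?rpred_sum // => m _; rewrite rpredM ?intr_int.
Qed.

Lemma root_rootlike x : is_root A x -> rootlike x.
Proof.
case=> w [i ->]; elim: w => [|j w IHw] /=; first exact: rootlike_sroot.
exact: rootlike_sref.
Qed.

Lemma rootlike_neq0 x : rootlike x -> x != 0.
Proof.
move=> [i [x_norm _]]; apply/eqP => x0; move/eqP: x_norm.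
rewrite x0 (_ : toQ 0 = 0) ?bform0r; last by apply/rowP => k; rewrite !mxE.
by rewrite eq_sym mulf_eq0 (negbTE (d_neq0 i)).
Qed.

(* Here [bform y y / d i] is an even integer: it is the value at [y] of an
   integral symmetric form with even diagonal. *)
Lemma bform_integral_ge (y : 'rV[int]_n) i :
  y != 0 -> (forall j, 0 <= y 0 j) ->
  (forall j, (y 0 j)%:~R * d j / d i \is a Num.int) ->
  2 * d i <= bform (toQ y) (toQ y).
Proof.
move=> y0 y_ge0 y_int; pose u j := (y 0 j)%:~R * d j / d i.
pose N := \sum_a \sum_b u a * (A a b)%:~R * (y 0 b)%:~R.
have BN : bform (toQ y) (toQ y) = d i * N.
  rewrite bform_sum /N mulr_sumr; apply: eq_bigr => a _; rewrite mulr_sumr.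
  by apply: eq_bigr => b _; rewrite /u !mxE; field; rewrite d_neq0.
have N_even : N / 2 \is a Num.int.
  apply: int_half_sum_symmetric => [a b|a b|a].
  - rewrite /u; transitivity (d a * (A a b)%:~R * (y 0 a)%:~R * (y 0 b)%:~R / d i).
      by ring.
    by rewrite d_sym; ring.
  - by rewrite rpredM ?intr_int // rpredM ?intr_int // y_int.
  - rewrite A_diag (_ : u a * 2%:~R * (y 0 a)%:~R / 2 = u a * (y 0 a)%:~R).
      by rewrite rpredM ?intr_int // y_int.
    by field.
have N_gt0 : 0 < N.
  rewrite -(pmulr_rgt0 _ (d_gt0 i)) -BN bform_gt0 //.
  apply: contra y0 => /eqP/rowP y0; apply/eqP/rowP => j.
  by have := y0 j; rewrite !mxE => /eqP; rewrite intr_eq0 => /eqP.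
have := int_gt0_ge1 N_even (divr_gt0 N_gt0 (isT : (0 : rat) < 2)).
by rewrite ler_pdivlMr // mul1r BN mulrC ler_pM2l ?d_gt0.
Qed.

Definition pospart (x : 'rV[int]_n) : 'rV[int]_n := \row_j posp (x 0 j).

Lemma pospart_subN x : x = pospart x - pospart (- x).
Proof.
apply/rowP => j; rewrite !mxE /posp.
have [x0|x0] := lerP 0 (x 0 j); first by rewrite max_r ?subr0 // oppr_le0.
by rewrite max_l ?sub0r ?opprK // oppr_ge0 ltW.
Qed.

Lemma pospart_ge0 x j : 0 <= pospart x 0 j.
Proof. by rewrite mxE posp_ge0. Qed.

Lemma pospart_eq0 x j : pospart x = 0 -> x 0 j <= 0.
Proof. by move/rowP/(_ j); rewrite !mxE /posp => /max_idPr. Qed.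

Lemma bform_pospart_le0 x : bform (toQ (pospart x)) (toQ (pospart (- x))) <= 0.
Proof.
rewrite bform_sum; apply: sumr_le0 => a _; apply: sumr_le0 => b _.
have [<-|ab] := eqVneq a b.
  by rewrite !mxE mulrAC -intrM posp_mulN mul0r.
rewrite -mulrA; apply: mulr_ge0_le0; first by rewrite mxE ler0z pospart_ge0.
apply: mulr_le0_ge0; last by rewrite mxE ler0z pospart_ge0.
by rewrite pmulr_rle0 ?d_gt0 // lerz0 A_offdiag.
Qed.

Lemma rootlike_sign x :
  rootlike x -> (forall j, 0 <= x 0 j) \/ (forall j, x 0 j <= 0).
Proof.
move=> [i [x_norm x_int]]; set P := pospart x; set Q := pospart (- x).
have [Q0|Q_neq0] := eqVneq Q 0.
  by left => j; have := pospart_eq0 j Q0; rewrite mxE oppr_le0.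
have [P0|P_neq0] := eqVneq P 0; first by right => j; exact: pospart_eq0.
exfalso; have part_ge (y : 'rV[int]_n) : pospart y != 0 ->
    (forall j, (y 0 j)%:~R * d j / d i \is a Num.int) ->
    2 * d i <= bform (toQ (pospart y)) (toQ (pospart y)).
  move=> y0 y_int; apply: bform_integral_ge => // j; first exact: pospart_ge0.
  by rewrite mxE -mulrA; apply: posp_int; rewrite mulrA.
have P_ge : 2 * d i <= bform (toQ P) (toQ P) := part_ge x P_neq0 x_int.
have Q_ge : 2 * d i <= bform (toQ Q) (toQ Q).
  by apply: part_ge => // j; rewrite mxE intrN !mulNr rpredN.
have PQ_le0 := bform_pospart_le0 x; rewrite -/P -/Q in PQ_le0.
have := d_gt0 i; move: x_norm; rewrite (pospart_subN x) -/P -/Q.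
rewrite (_ : toQ (P - Q) = toQ P - toQ Q); last first.
  by apply/rowP => j; rewrite !mxE rmorphB.
rewrite bformBl !bformBr (bformC (toQ Q)); lra.
Qed.

Lemma rootlike_supported x j : rootlike x ->
  (forall k, k != j -> x 0 k = 0) -> 0 <= x 0 j -> x = sroot j.
Proof.
move=> x_rl x_supp xj_ge0; have x_neq0 := rootlike_neq0 x_rl.
case: x_rl => i [x_norm x_int]; set t := x 0 j in xj_ge0.
have x_t : x = t *: sroot j.
  apply/rowP => k; rewrite !mxE; have [->|kj] := eqVneq k j; first by rewrite mulr1.
  by rewrite mulr0 x_supp.
have t_gt0 : (0 : rat) < t%:~R.
  rewrite ltr0z lt_def xj_ge0 andbT; apply: contra x_neq0 => /eqP t0.
  by rewrite x_t t0 scale0r.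
have d_i : d i = t%:~R ^+ 2 * d j.
  move: x_norm; rewrite x_t.
  have -> : toQ (t *: sroot j) = t%:~R *: toQ (sroot j).
    by apply/rowP => k; rewrite !mxE rmorphM.
  rewrite bformZl bformZr (toQ_sroot j) bform_deltal corootQ_delta // => E.
  by apply: (@mulfI _ 2) => //; rewrite -E; ring.
have /int_gt0_ge1 : (t%:~R : rat)^-1 \is a Num.int.
  have := x_int j; rewrite -/t d_i.
  rewrite (_ : t%:~R * d j / (t%:~R ^+ 2 * d j) = t%:~R^-1) //.
  by field; rewrite d_neq0 gt_eqF.
rewrite invr_gt0 => /(_ t_gt0); rewrite invr_ge1 ?unitfE ?gt_eqF // lerz1 => t_le1.
by rewrite x_t (_ : t = 1) ?scale1r //; move: t_gt0; rewrite ltr0z; lia.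
Qed.

Lemma sref_pos_root j x :
  is_pos_root A x -> x != sroot j -> is_pos_root A (sref A j x).
Proof.
move=> [x_root x_ge0] x_neq; have sx_root := wact_root [:: j] x_root.
split=> //; case: (rootlike_sign (root_rootlike sx_root)) => // sx_le0.
case/eqP: x_neq; apply: rootlike_supported (root_rootlike x_root) _ (x_ge0 j).
move=> k kj; apply/eqP; rewrite eq_le x_ge0 andbT.
by have := sx_le0 k; rewrite sref_coord_neq.
Qed.

Lemma wact_sroot_pos_root w i :
  uniq w -> i \notin w -> is_pos_root A (wact A w (sroot i)).
Proof.
elim: w => [|j w IHw] /=.
  by split=> [|k]; [exists [::], i | rewrite mxE; case: (_ == _)].
move=> /andP[jw w_uniq]; rewrite in_cons negb_or => /andP[ij iw].
apply: sref_pos_root; first exact: IHw.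
apply/eqP => /rowP /(_ j); rewrite wact_coord_notin // !mxE !eqxx.
by rewrite eq_sym (negbTE ij).
Qed.

Lemma beta_cat l1 l2 i :
  i \notin l1 -> beta A (l1 ++ i :: l2) i = wact A (rev l2) (sroot i).
Proof.
move=> il1; rewrite /beta index_cat (negbTE il1) /= eqxx addn0.
by rewrite -cat_rcons drop_size_cat ?size_rcons.
Qed.

Lemma beta_pos_root s i : uniq s -> i \in s -> is_pos_root A (beta A s i).
Proof.
move=> s_uniq /splitPr s_split; case: s_split s_uniq => l1 l2.
move=> /uniq_cat_cons_notin [il1 il2 l2_uniq]; rewrite beta_cat //.
by apply: wact_sroot_pos_root; rewrite ?rev_uniq ?mem_rev.
Qed.

Lemma wact_beta s i :
  uniq s -> i \in s -> wact A s (beta A s i) = - beta A (rev s) i.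
Proof.
move=> s_uniq /splitPr s_split; case: s_split s_uniq => l1 l2.
move=> /uniq_cat_cons_notin [il1 il2 _].
rewrite beta_cat // rev_cat rev_cons -cats1 -catA /= beta_cat ?mem_rev // revK.
by rewrite wact_cat /= wact_revKV // sref_sroot // wactN.
Qed.

Lemma pos_root_neq_opp a b : is_pos_root A a -> is_pos_root A b -> a != - b.
Proof.
move=> [a_root a_ge0] [_ b_ge0]; apply/eqP => ab.
have := rootlike_neq0 (root_rootlike a_root); apply/negP/negPn.
apply/eqP/rowP => j; apply/eqP; rewrite mxE eq_le a_ge0 andbT.
by rewrite ab mxE oppr_le0.
Qed.

Lemma tau_beta s i : tau A s (beta A s i) = - beta A s i.
Proof. by rewrite /tau; case: pickP => [j /eqP <- //|/(_ i)]; rewrite eqxx. Qed.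

Lemma tau_notbeta s a : (forall i, a != beta A s i) -> tau A s a = cox A s a.
Proof.
by move=> a_nb; rewrite /tau; case: pickP => // j; rewrite (negbTE (a_nb j)).
Qed.

Lemma beta_dec s a : {i | a = beta A s i} + {forall i, a != beta A s i}.
Proof.
case: (pickP (fun i => a == beta A s i)) => [i /eqP ->|a_nb]; first by left; exists i.
by right => i; rewrite a_nb.
Qed.

Lemma tau_Nbeta w i : uniq w -> (forall j, j \in w) ->
  tau A w (- beta A w i) = beta A (rev w) i.
Proof.
move=> w_uniq w_full; rewrite tau_notbeta /cox ?wactN ?wact_beta ?opprK // => j.
by rewrite eq_sym; apply: pos_root_neq_opp; apply: beta_pos_root.
Qed.

Lemma posp_coef_Nbeta w i j :
  uniq w -> i \in w -> posp (coef (- beta A w i) j) = 0.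
Proof.
move=> w_uniq iw; rewrite /coef /posp mxE max_r // oppr_le0.
by have [_] := beta_pos_root w_uniq iw.
Qed.

Section CoxeterWord.
Variable s : seq 'I_n.
Hypothesis s_uniq : uniq s.
Hypothesis s_full : forall i, i \in s.

Local Notation C := (wordmx s).

Let rev_s_uniq : uniq (rev s). Proof. by rewrite rev_uniq. Qed.
Let rev_s_full i : i \in rev s. Proof. by rewrite mem_rev. Qed.
Let beta_s_pos i : is_pos_root A (beta A s i). Proof. exact: beta_pos_root. Qed.
Let beta_rev_s_pos i : is_pos_root A (beta A (rev s) i).
Proof. exact: beta_pos_root. Qed.

Lemma coxmx_fixed_eq0 (x : 'rV[rat]_n) : x *m C = x -> x = 0.
Proof.
move=> fix_x; apply: bform_eq0; rewrite bform_sum big1 // => i _.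
have := wordmx_fixed_corootQ s_uniq fix_x (s_full i); rewrite /corootQ => x_i0.
transitivity (x 0 i * d i * \sum_j (A i j)%:~R * x 0 j); last by rewrite x_i0 mulr0.
by rewrite mulr_sumr; apply: eq_bigr => j _; ring.
Qed.

Lemma coord_sum_dual :
  exists u, forall x : 'rV[rat]_n, bform (x *m C - x) u = \sum_j x 0 j.
Proof.
pose M := (C - 1%:M) *m symA.
have M_unit : M \in unitmx.
  rewrite -row_free_unit; apply: inj_row_free => v vM0.
  apply: coxmx_fixed_eq0; apply/eqP; rewrite -subr_eq0 -{2}[v]mulmx1 -mulmxBr.
  by apply/eqP/bform_eq0; rewrite /bform -(mulmxA v) vM0 mul0mx mxE.
exists (invmx M *m const_mx 1)^T => x; rewrite /bform trmxK.
have -> : (x *m C - x) *m symA = x *m M by rewrite mulmxA mulmxBr mulmx1.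
rewrite mulmxA mulmxK // mxE.
by apply: eq_bigr => j _; rewrite mxE mulr1.
Qed.

Lemma coxeter_orbit_coord_sum_bounded (x : 'rV[rat]_n) :
  exists M, forall N, \sum_(0 <= m < N) \sum_j iter m (mulmxr C) x 0 j <= M.
Proof.
have [u uP] := coord_sum_dual.
exists (1 + bform x x * bform u u - bform x u) => N.
have -> : \sum_(0 <= m < N) \sum_j iter m (mulmxr C) x 0 j
          = bform (iter N (mulmxr C) x) u - bform x u.
  have /= <- := telescope_sumr (fun m => bform (iter m (mulmxr C) x) u) (leq0n N).
  by apply: eq_bigr => m _; rewrite -uP bformBl.
apply: lerB => //; apply: sqr_le_bound; first by rewrite mulr_ge0 ?bform_ge0.
have -> : bform x x = bform (iter N (mulmxr C) x) (iter N (mulmxr C) x).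
  by elim: N => //= N ->; rewrite bform_wordmx.
exact: bform_cauchy_schwarz.
Qed.

Lemma toQ_iter_wact m a : toQ (iter m (wact A s) a) = iter m (mulmxr C) (toQ a).
Proof. by elim: m => //= m <-; rewrite toQ_wact. Qed.

Lemma iter_wact_neq0 m (a : 'rV[int]_n) : a != 0 -> iter m (wact A s) a != 0.
Proof.
move=> a0; elim: m => //= m; apply: contra => /eqP cy0.
by rewrite -(wact_revK s (iter m _ a)) cy0 wact0.
Qed.

Lemma coxeter_orbit_leaves_nonneg (a : 'rV[int]_n) :
  a != 0 -> exists m j, iter m (wact A s) a 0 j < 0.
Proof.
move=> a0; have [M sumM] := coxeter_orbit_coord_sum_bounded (toQ a).
set N := Num.bound `|M|.
have [/existsP[m /existsP[j neg]]|] :=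
  boolP [exists m : 'I_N, [exists j, iter m (wact A s) a 0 j < 0]].
  by exists m, j.
rewrite negb_exists => /forallP orbit_nonneg; exfalso.
have : N%:R <= M.
  apply: le_trans (sumM N); rewrite big_mkord -[N in N%:R]card_ord -sumr_const.
  apply: ler_sum => m _; rewrite -toQ_iter_wact.
  apply: toQ_coord_sum_ge1; first exact: iter_wact_neq0.
  by move=> j; rewrite leNgt; have := orbit_nonneg m; rewrite negb_exists => /forallP.
by apply/negP; rewrite -ltNge (le_lt_trans (ler_norm M)) ?archi_boundP.
Qed.

Lemma wact_pos_root_notbeta a :
  is_pos_root A a -> (forall i, a != beta A s i) -> is_pos_root A (wact A s a).
Proof.
move=> a_pos a_nb; suff : forall q p, s = p ++ q -> is_pos_root A (wact A q a).
  by move=> /(_ s [::] erefl).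
elim=> [|j q IHq] p s_pq //=; rewrite -cat_rcons in s_pq.
apply: sref_pos_root; first exact: IHq s_pq.
apply/eqP => qa; have/negP := a_nb j; apply; apply/eqP.
rewrite -(wact_revK q a) qa s_pq cat_rcons beta_cat //.
by have := s_uniq; rewrite s_pq cat_rcons => /uniq_cat_cons_notin[].
Qed.

Lemma tau_mem x : in_Phi_ap A s x -> in_Phi_ap A s (tau A s x).
Proof.
case=> [x_pos|[i ->]]; last by rewrite tau_Nbeta //; left; apply: beta_rev_s_pos.
case: (beta_dec s x) => [[i ->]|x_nb]; first by rewrite tau_beta; right; exists i.
by left; rewrite tau_notbeta //; apply: wact_pos_root_notbeta.
Qed.

Lemma bar_Nbeta i : bar A s (- beta A s i) = - beta A (rev s) i.
Proof.
rewrite /bar; case: pickP => [j /eqP/oppr_inj bij|/(_ i)]; last by rewrite eqxx.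
by rewrite -!wact_beta // bij.
Qed.

Lemma bar_pos a : is_pos_root A a -> bar A s a = a.
Proof.
move=> a_pos; rewrite /bar; case: pickP => // j /eqP a_Nbeta.
by have/eqP := pos_root_neq_opp a_pos (beta_s_pos j).
Qed.

Lemma bar_mem x : in_Phi_ap A s x -> in_Phi_ap A (rev s) (bar A s x).
Proof.
case=> [x_pos|[i ->]]; first by rewrite bar_pos //; left.
by rewrite bar_Nbeta; right; exists i.
Qed.

Lemma tau_bar x :
  in_Phi_ap A s x -> tau A (rev s) (bar A s (tau A s x)) = bar A s x.
Proof.
case=> [x_pos|[i ->]]; last first.
  by rewrite tau_Nbeta // bar_pos ?tau_beta ?bar_Nbeta //; apply: beta_rev_s_pos.
case: (beta_dec s x) => [[i ->]|x_nb].
  by rewrite tau_beta bar_Nbeta tau_Nbeta // revK bar_pos.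
have cx_pos := wact_pos_root_notbeta x_pos x_nb.
rewrite tau_notbeta // /cox !bar_pos // tau_notbeta /cox ?wact_revK // => j.
apply: contraNneq (pos_root_neq_opp x_pos (beta_s_pos j)).
by move=> cx; apply/eqP; rewrite -(wact_revK s x) cx wact_beta // revK.
Qed.

Lemma tau_iter_Nbeta a :
  is_pos_root A a -> exists k i, iter k (tau A s) a = - beta A s i.
Proof.
move=> a_pos; have a_neq0 := rootlike_neq0 (root_rootlike a_pos.1).
have [m [j]] := coxeter_orbit_leaves_nonneg a_neq0.
elim: m a a_pos {a_neq0} => [|m IHm] a a_pos; first by rewrite /= ltNge a_pos.2.
case: (beta_dec s a) => [[i ->] _|a_nb]; first by exists 1%N, i; rewrite /= tau_beta.
rewrite iterSr => /(IHm _ (wact_pos_root_notbeta a_pos a_nb))[k [i iter_k]].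
by exists k.+1, i; rewrite iterSr tau_notbeta.
Qed.

Lemma pairing_bar f g : is_pairing_c A s f -> is_pairing_c A (rev s) g ->
  forall a b, in_Phi_ap A s a -> in_Phi_ap A s b ->
  f a b = g (bar A s a) (bar A s b).
Proof.
move=> [f_tau f_Nbeta] [g_tau g_Nbeta].
pose P a := forall b, in_Phi_ap A s b -> f a b = g (bar A s a) (bar A s b).
have P_Nbeta i : P (- beta A s i).
  move=> y y_mem; rewrite f_Nbeta // bar_Nbeta g_Nbeta; last exact: bar_mem.
  case: y_mem => [y_pos|[j ->]]; first by rewrite bar_pos.
  by rewrite bar_Nbeta !posp_coef_Nbeta.
have P_tau a : in_Phi_ap A s a -> P (tau A s a) -> P a.
  move=> a_mem IH y y_mem; rewrite -f_tau // IH; try exact: tau_mem.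
  by rewrite -g_tau ?tau_bar //; apply/bar_mem/tau_mem.
move=> a b a_mem; move: b; rewrite -/(P a).
case: (a_mem) => [a_pos|[i ->]]; last exact: P_Nbeta.
have [k [i iter_k]] := tau_iter_Nbeta a_pos.
elim: k a a_mem iter_k {a_pos} => [|k IHk] a a_mem /= iter_k; first by rewrite iter_k.
by apply: P_tau => //; apply: IHk; [exact: tau_mem | rewrite -iterSr].
Qed.

End CoxeterWord.

End RootSystem.

Unset Implicit Arguments.
Set Strict Implicit.

Theorem proposition3p4 (n : nat) (A : 'M[int]_n) (l : seq 'I_n)
  (f g : 'rV[int]_n -> 'rV[int]_n -> int) :
  finite_type_cartan A ->
  coxeter_word l ->
  is_pairing_c A l f ->
  is_pairing_c A (rev l) g ->
  forall a b : 'rV[int]_n,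
    in_Phi_ap A l a -> in_Phi_ap A l b ->
    f a b = g (bar A l a) (bar A l b).
Proof.
move=> [[A_diag [A_offdiag _]] [d [d_gt0 [d_sym d_posdef]]]] l_cox.
have l_uniq : uniq l by rewrite (perm_uniq l_cox) enum_uniq.
have l_full i : i \in l by rewrite (perm_mem l_cox) mem_enum.
have bform_gt0 (x : 'rV[rat]_n) : x != 0 -> 0 < bform A d x x.
  by rewrite bform_sum; exact: d_posdef.
exact: pairing_bar.
Qed.
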